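(* Let $L,K\ge1$, let $\mathbf{M}=(m_{l,k})\in\mathbb{R}^{L\times K}$ have all entries strictly positive, and equip $\mathbb{R}^{L\times K}$ with the inner product $\langle\mathbf{Y},\mathbf{Z}\rangle_{\mathbf{M}}=\sum_{l=1}^L\sum_{k=1}^K m_{l,k}y_{l,k}z_{l,k}$ and its norm $\|\cdot\|_{\mathbf{M}}$. Let $\mathcal{H}$ be the subspace of $L\times K$ Hankel matrices and, for an integer $r\ge0$, let $\mathcal{M}_r$ be the set of $L\times K$ matrices of rank at most $r$. Let $\Pi_{\mathcal{H}}$ be the $\|\cdot\|_{\mathbf{M}}$-orthogonal projection onto $\mathcal{H}$ and $\Pi_{\mathcal{M}_r}$ a map assigning to each matrix a $\|\cdot\|_{\mathbf{M}}$-closest point of $\mathcal{M}_r$. For $\mathbf{X}\in\mathbb{R}^{L\times K}$ put $\mathbf{Y}_0=\mathbf{X}$, $\mathbf{Y}_{k+1}=\Pi_{\mathcal{H}}\Pi_{\mathcal{M}_r}\mathbf{Y}_k$. Then $\|\mathbf{Y}_k-\Pi_{\mathcal{M}_r}\mathbf{Y}_k\|_{\mathbf{M}}\to0$, $\|\Pi_{\mathcal{M}_r}\mathbf{Y}_k-\mathbf{Y}_{k+1}\|_{\mathbf{M}}\to0$, and some subsequence of $(\mathbf{Y}_k)$ converges to a Hankel matrix of rank at most $r$.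
   Context: A matrix $(y_{i,j})\in\mathbb{R}^{L\times K}$ is Hankel if $y_{i,j}$ depends only on $i+j$. *)

From HB Require Import structures.
From Stdlib Require Import Reals ClassicalEpsilon FunctionalExtensionality.
From mathcomp Require Import all_boot all_order all_algebra.

Set Implicit Arguments.
Unset Strict Implicit.
Unset Printing Implicit Defensive.

Definition Req_bool (x y : R) : bool := if Req_EM_T x y then true else false.

Lemma Req_boolP : Equality.axiom Req_bool.
Proof. by move=> x y; rewrite /Req_bool; case: Req_EM_T => H; constructor. Qed.

HB.instance Definition _ := hasDecEq.Build R Req_boolP.

Definition R_find (P : pred R) (n : nat) : option R :=
  match excluded_middle_informative (exists x, P x) with
  | left H => Some (proj1_sig (constructive_indefinite_description _ H))
  | right _ => None
  end.

Lemma R_find_correct P n x : R_find P n = Some x -> P x.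
Proof.
rewrite /R_find; case: excluded_middle_informative => // H [<-].
exact: proj2_sig (constructive_indefinite_description _ H).
Qed.

Lemma R_find_complete (P : pred R) : (exists x, P x) -> exists n, R_find P n.
Proof. by move=> H; exists 0%N; rewrite /R_find; case: excluded_middle_informative. Qed.

Lemma R_find_ext (P Q : pred R) : P =1 Q -> R_find P =1 R_find Q.
Proof. by move=> /functional_extensionality ->. Qed.

HB.instance Definition _ :=
  hasChoice.Build R R_find_correct R_find_complete R_find_ext.

Lemma R_addA : associative Rplus.
Proof. by move=> x y z; rewrite Rplus_assoc. Qed.
Lemma R_addC : commutative Rplus.
Proof. exact: Rplus_comm. Qed.
Lemma R_add0 : left_id R0 Rplus.
Proof. exact: Rplus_0_l. Qed.
Lemma R_addN : left_inverse R0 Ropp Rplus.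
Proof. exact: Rplus_opp_l. Qed.

HB.instance Definition _ := GRing.isZmodule.Build R R_addA R_addC R_add0 R_addN.

Lemma R_mulA : associative Rmult.
Proof. by move=> x y z; rewrite Rmult_assoc. Qed.
Lemma R_mulC : commutative Rmult.
Proof. exact: Rmult_comm. Qed.
Lemma R_mul1 : left_id R1 Rmult.
Proof. exact: Rmult_1_l. Qed.
Lemma R_mulDl : left_distributive Rmult Rplus.
Proof. by move=> x y z; rewrite Rmult_plus_distr_r. Qed.
Lemma R_one_neq0 : R1 != R0.
Proof. by apply/eqP; exact: R1_neq_R0. Qed.

HB.instance Definition _ :=
  GRing.Zmodule_isComNzRing.Build R R_mulA R_mulC R_mul1 R_mulDl R_one_neq0.

Definition R_inv (x : R) : R := if Req_EM_T x R0 then R0 else Rinv x.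

Lemma R_mulVf (x : R) : x != R0 -> Rmult (R_inv x) x = R1.
Proof.
move=> /eqP nx; rewrite /R_inv; destruct (Req_EM_T x R0) as [e|n].
- by case: nx.
- exact: Rinv_l.
Qed.

Lemma R_inv0 : R_inv R0 = R0.
Proof. by rewrite /R_inv; destruct (Req_EM_T R0 R0). Qed.

HB.instance Definition _ := GRing.ComNzRing_isField.Build R R_mulVf R_inv0.

Local Open Scope ring_scope.

Definition inprodM (L K : nat) (M Y Z : 'M[R]_(L, K)) : R :=
  \sum_(l < L) \sum_(k < K) M l k * Y l k * Z l k.

Definition normM (L K : nat) (M Y : 'M[R]_(L, K)) : R := sqrt (inprodM M Y Y).

Definition hankel (L K : nat) (Y : 'M[R]_(L, K)) : Prop :=
  forall (i i' : 'I_L) (j j' : 'I_K),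
    (i + j = i' + j')%N -> Y i j = Y i' j'.

Definition is_orth_proj_hankel (L K : nat) (M : 'M[R]_(L, K))
  (PH : 'M[R]_(L, K) -> 'M[R]_(L, K)) : Prop :=
  forall Y, hankel (PH Y) /\
    (forall Z, hankel Z -> inprodM M (Y - PH Y) Z = 0).

Definition is_nearest_low_rank (L K r : nat) (M : 'M[R]_(L, K))
  (PM : 'M[R]_(L, K) -> 'M[R]_(L, K)) : Prop :=
  forall Y, (\rank (PM Y) <= r)%N /\
    (forall Z : 'M[R]_(L, K), (\rank Z <= r)%N ->
       Rle (normM M (Y - PM Y)) (normM M (Y - Z))).

(* entrywise convergence of a sequence of matrices (= convergence in
   the finite-dimensional space R^{L x K}) *)
Definition mx_cv (L K : nat) (u : nat -> 'M[R]_(L, K)) (A : 'M[R]_(L, K)) : Prop :=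
  forall (i : 'I_L) (j : 'I_K), Un_cv (fun n => u n i j) (A i j).

From HB Require Import structures.
From Stdlib Require Import Reals Lra Lia Psatz ClassicalEpsilon.
From mathcomp Require Import all_boot all_order all_algebra.

Set Implicit Arguments.
Unset Strict Implicit.
Unset Printing Implicit Defensive.

Import GRing.Theory.

(* Both projections are orthogonal, so ||Z||^2 = ||Pi Z||^2 + ||Z - Pi Z||^2
   for each of them and the iterates stay in the ball of radius ||X||. Put
   d_n = ||Y_n - Pi_M Y_n||^2, e_n = ||Pi_M Y_n - Y_(n+1)||^2 and
   s_n = ||Y_(n+1) - Y_n||^2. For n >= 1, Y_n and Y_(n+1) are Hankel, so
   Pythagoras gives d_n = e_n + s_n, and optimality of Pi_M gives
   d_(n+1) <= e_n. Hence (d_n) decreases and s_n -> 0. Moreover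
   d_n = <Y_n - Y_(n+1), Y_n>_M, so d_n^2 <= s_n ||X||^2 -> 0. A subsequence
   converges by Bolzano-Weierstrass; its limit is Hankel, and has rank at most
   r because it is also the limit of the Pi_M Y_n and a nonvanishing minor
   stays nonvanishing nearby. *)

(* The GRing operations on Stdlib's R reduce to Rplus, Rmult, ...; exposing
   them lets lra and nra work on scalar goals. *)
Ltac Rops :=
  unfold GRing.add, Algebra.add, GRing.mul, GRing.opp, GRing.zero, GRing.one in *;
  cbn in *.

Section Reals.
Local Open Scope R_scope.
Implicit Types (u v : nat -> R) (l : R).

Lemma Un_cv_const c : Un_cv (fun _ => c) c.
Proof. by move=> e he; exists 0%nat => n _; rewrite /R_dist Rminus_diag Rabs_R0. Qed.

Lemma Un_cv_succE u l : Un_cv (fun n => u n.+1) l <-> Un_cv u l.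
Proof.
split=> hu e he; have [N hN] := hu e he.
- by exists N.+1 => -[|n] hn; [lia | apply: hN; lia].
- by exists N => n hn; apply: hN; lia.
Qed.

Lemma Un_cv_subseq u l (phi : nat -> nat) :
  (forall n, (phi n < phi n.+1)%N) -> Un_cv u l -> Un_cv (fun n => u (phi n)) l.
Proof.
move=> phiS hu e he; have [N hN] := hu e he; exists N => n hn; apply: hN.
have : (n <= phi n)%N by elim: n {hn} => // n IH; exact: leq_ltn_trans IH (phiS n).
by move/leP; lia.
Qed.

Lemma Un_cv_squeeze0 u v : (forall n, 0 <= u n <= v n) -> Un_cv v 0 -> Un_cv u 0.
Proof.
move=> huv hv e he; have [N hN] := hv e he; exists N => n /hN.
by rewrite /R_dist !Rminus_0_r; have := huv n; split_Rabs; lra.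
Qed.

Lemma Un_cv_sqrt0 u : Un_cv u 0 -> Un_cv (fun n => sqrt (u n)) 0.
Proof.
by move=> hu; rewrite -sqrt_0; apply: continuity_seq hu; apply: continuity_pt_sqrt; lra.
Qed.

Lemma Un_cv_sqr0 u : Un_cv (fun n => u n * u n) 0 -> Un_cv u 0.
Proof.
move=> /Un_cv_sqrt0 hu e he; have [N hN] := hu e he; exists N => n /hN.
by rewrite /R_dist !Rminus_0_r -/(Rsqr _) sqrt_Rsqr_abs Rabs_Rabsolu.
Qed.

Lemma bolzano_weierstrass_subseq u C : (forall n, Rabs (u n) <= C) ->
  exists2 phi : nat -> nat, (forall n, (phi n < phi n.+1)%N) &
    exists l, Un_cv (fun n => u (phi n)) l.
Proof.
move=> hC.
have [l hl] : exists l, ValAdh u l.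
  apply: (Bolzano_Weierstrass u _ (compact_P3 (- C) C)) => n.
  by have := hC n; split_Rabs; lra.
have close N k : exists p, (N <= p)%coq_nat /\ Rabs (u p - l) < / INR k.+1.
  have pos : 0 < / INR k.+1 by apply/Rinv_0_lt_compat/lt_0_INR; lia.
  have [p [hp hup]] := hl (disc l (mkposreal _ pos)) N
    (ex_intro _ (mkposreal _ pos) (fun y h => h)).
  by exists p.
pose next N k := proj1_sig (constructive_indefinite_description _ (close N k)).
have nextP N k : (N <= next N k)%coq_nat /\ Rabs (u (next N k) - l) < / INR k.+1.
  by rewrite /next; case: constructive_indefinite_description.
pose fix phi n := if n is m.+1 then next (phi m).+1 n else next 0%nat 0%nat.
exists phi; first by move=> n /=; apply/ltP; have := proj1 (nextP (phi n).+1 n.+1); lia.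
exists l => e he; have [N [hNe N0]] := archimed_cor1 e he.
exists N => n hn; rewrite /R_dist.
have hphi : Rabs (u (phi n) - l) < / INR n.+1 by case: n {hn} => [|n]; exact: (nextP _ _).2.
apply: Rlt_le_trans hphi (Rle_trans _ _ _ _ (Rlt_le _ _ hNe)).
by apply: Rinv_le_contravar; [apply: lt_0_INR | apply: le_INR]; lia.
Qed.

Lemma bolzano_weierstrass_fin (I : eqType) (u : nat -> I -> R) (C : I -> R) :
  (forall n i, Rabs (u n i) <= C i) -> forall s : seq I,
  exists2 phi : nat -> nat, (forall n, (phi n < phi n.+1)%N) &
    forall i, i \in s -> exists l, Un_cv (fun n => u (phi n) i) l.
Proof.
move=> hC; elim=> [|i s [phi phiS hs]]; first by exists id.
have [psi psiS [l hl]] := bolzano_weierstrass_subseq (fun n => hC (phi n) i).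
exists (phi \o psi) => [n | j]; first exact: (homo_ltn ltn_trans phiS (psiS n)).
rewrite in_cons => /orP[/eqP-> | /hs[l' hl']]; first by exists l.
by exists l'; exact: (Un_cv_subseq (u := fun n => u (phi n) j) psiS hl').
Qed.

Lemma quadratic_nonneg_discriminant A B C :
  0 <= C -> (forall t, 0 <= A + 2 * t * B + t ^ 2 * C) -> B ^ 2 <= A * C.
Proof.
move=> hC hq; have hA := hq 0.
have [C0 | Cpos] := Req_dec C 0.
  subst C; have [-> | B0] := Req_dec B 0; first nra.
  have := hq (- (A + 1) / (2 * B)).
  have -> : A + 2 * (- (A + 1) / (2 * B)) * B + (- (A + 1) / (2 * B)) ^ 2 * 0 = - 1
    by field.
  lra.
have := hq (- B / C).
have -> : A + 2 * (- B / C) * B + (- B / C) ^ 2 * C = (A * C - B ^ 2) / C by field.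
move=> h; have : 0 <= (A * C - B ^ 2) / C * C by apply: Rmult_le_pos; lra.
have -> : (A * C - B ^ 2) / C * C = A * C - B ^ 2 by field.
lra.
Qed.

End Reals.

Lemma sumr_ge0R (I : Type) (s : seq I) (P : pred I) (F : I -> R) :
  (forall i, P i -> Rle 0 (F i)) -> Rle 0 (\sum_(i <- s | P i) F i)%R.
Proof. by move=> F_ge0; apply: big_ind => // [|x y]; Rops; lra. Qed.

Lemma ler_sum_termR (n : nat) (F : 'I_n -> R) (i : 'I_n) :
  (forall j, Rle 0 (F j)) -> Rle (F i) (\sum_(j < n) F j)%R.
Proof.
move=> F_ge0; rewrite (bigD1 i) //=.
have := sumr_ge0R (index_enum _) (P := fun j => j != i) (fun j _ => F_ge0 j); Rops; lra.
Qed.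

Section WeightedInnerProduct.
Local Open Scope ring_scope.
Variables (L K : nat) (M : 'M[R]_(L, K)).
Hypothesis M_gt0 : forall (l : 'I_L) (k : 'I_K), Rlt 0 (M l k).
Local Notation ip := (inprodM M).
Implicit Types Y Z W : 'M[R]_(L, K).

Lemma inprodMC Y Z : ip Y Z = ip Z Y.
Proof. by apply: eq_bigr => i _; apply: eq_bigr => j _; Rops; ring. Qed.

Lemma inprodMDl Y Z W : ip (Y + Z) W = ip Y W + ip Z W.
Proof.
rewrite /inprodM -big_split; apply: eq_bigr => i _.
by rewrite -big_split; apply: eq_bigr => j _; rewrite !mxE; Rops; ring.
Qed.

Lemma inprodMNl Y W : ip (- Y) W = - ip Y W.
Proof.
rewrite /inprodM -sumrN; apply: eq_bigr => i _.
by rewrite -sumrN; apply: eq_bigr => j _; rewrite !mxE; Rops; ring.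
Qed.

Lemma inprodMZl a Y W : ip (a *: Y) W = a * ip Y W.
Proof.
rewrite /inprodM mulr_sumr; apply: eq_bigr => i _.
by rewrite mulr_sumr; apply: eq_bigr => j _; rewrite !mxE; Rops; ring.
Qed.

Lemma inprodMDr Y Z W : ip W (Y + Z) = ip W Y + ip W Z.
Proof. by rewrite inprodMC inprodMDl !(inprodMC W). Qed.

Lemma inprodMNr Y W : ip W (- Y) = - ip W Y.
Proof. by rewrite inprodMC inprodMNl inprodMC. Qed.

Lemma inprodMZr a Y W : ip W (a *: Y) = a * ip W Y.
Proof. by rewrite inprodMC inprodMZl inprodMC. Qed.

Lemma inprodM_sqrD Y Z : ip (Y + Z) (Y + Z) = ip Y Y + (ip Y Z + ip Y Z) + ip Z Z.
Proof. by rewrite inprodMDl !inprodMDr (inprodMC Z Y) !addrA. Qed.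

Lemma inprodM_sqrN Y : ip (- Y) (- Y) = ip Y Y.
Proof. by rewrite inprodMNl inprodMNr opprK. Qed.

Lemma inprodM_ge0 Y : Rle 0 (ip Y Y).
Proof.
apply: sumr_ge0R => i _; apply: sumr_ge0R => j _.
by have := M_gt0 i j; Rops; nra.
Qed.

Lemma inprodM_cauchy_schwarz Y Z : Rle (ip Y Z * ip Y Z) (ip Y Y * ip Z Z).
Proof.
have /= := @quadratic_nonneg_discriminant (ip Y Y) (ip Y Z) (ip Z Z) (inprodM_ge0 Z).
rewrite Rmult_1_r; apply=> t.
have := inprodM_ge0 (Y + t *: Z).
by rewrite inprodM_sqrD !inprodMZr !inprodMZl; Rops; nra.
Qed.

Lemma sqr_entry_le_inprodM Y i j : Rle (Y i j * Y i j) (Rdiv (ip Y Y) (M i j)).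
Proof.
have Mij := M_gt0 i j.
apply: (Rmult_le_reg_l (M i j)) => //; rewrite Rmult_div_assoc Rmult_div_r; last lra.
have term_ge0 l k : Rle 0 (M l k * Y l k * Y l k) by have := M_gt0 l k; Rops; nra.
apply: (Rle_trans _ (\sum_(k < K) M i k * Y i k * Y i k)).
  by rewrite -Rmult_assoc; apply: (ler_sum_termR (F := fun k => M i k * Y i k * Y i k)).
apply: (ler_sum_termR (F := fun l => \sum_(k < K) M l k * Y l k * Y l k)) => l.
exact: sumr_ge0R.
Qed.

Lemma entry_bound_inprodM Y c i j :
  Rle (ip Y Y) c -> Rle (Rabs (Y i j)) (Rplus 1 (Rdiv c (M i j))).
Proof.
move=> Yc; have := sqr_entry_le_inprodM Y i j; have := M_gt0 i j.
have : Rle (ip Y Y / M i j) (c / M i j).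
  by apply: Rmult_le_compat_r => //; apply/Rlt_le/Rinv_0_lt_compat.
by move: (Y i j) => y; Rops; split_Rabs; nra.
Qed.

Lemma Un_cv_entry_inprodM0 (u : nat -> 'M[R]_(L, K)) i j :
  Un_cv (fun n => ip (u n) (u n)) 0 -> Un_cv (fun n => u n i j) 0.
Proof.
move=> hu; apply: Un_cv_sqr0.
apply: (Un_cv_squeeze0 (v := fun n => Rdiv (ip (u n) (u n)) (M i j))).
  by move=> n; split; [move: (u n i j) => y; nra | exact: sqr_entry_le_inprodM].
have := CV_mult _ _ _ _ hu (Un_cv_const (Rinv (M i j))).
by rewrite Rmult_0_l.
Qed.

End WeightedInnerProduct.

Section MatrixLimits.
Local Open Scope ring_scope.

Lemma Un_cv_big (op : R -> R -> R) (idx : R) (I : Type) (s : seq I) (P : pred I)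
    (f : nat -> I -> R) (g : I -> R) :
  (forall u v a b, Un_cv u a -> Un_cv v b -> Un_cv (fun n => op (u n) (v n)) (op a b)) ->
  (forall i, P i -> Un_cv (fun n => f n i) (g i)) ->
  Un_cv (fun n => \big[op/idx]_(i <- s | P i) f n i) (\big[op/idx]_(i <- s | P i) g i).
Proof.
move=> op_cv fg; elim: s => [|i s IH].
  by rewrite big_nil; apply: (Un_cv_ext _ _ _ _ (Un_cv_const idx)) => n; rewrite big_nil.
pose big_f n := \big[op/idx]_(j <- s | P j) f n j.
apply: (Un_cv_ext (fun n => if P i then op (f n i) (big_f n) else big_f n)).
  by move=> n; rewrite big_cons.
by rewrite big_cons; case: ifP => Pi //; apply: op_cv => //; apply: fg.
Qed.

Lemma Un_cv_det n (F : nat -> 'M[R]_n) (G : 'M[R]_n) :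
  (forall i j, Un_cv (fun k => F k i j) (G i j)) -> Un_cv (fun k => \det (F k)) (\det G).
Proof.
move=> FG; apply: Un_cv_big CV_plus _ => s _.
apply: CV_mult (Un_cv_const _) _.
by apply: Un_cv_big CV_mult _ => i _; apply: FG.
Qed.

Lemma mxrank_le_limit L K r (B : nat -> 'M[R]_(L, K)) (A : 'M[R]_(L, K)) :
  (forall n, \rank (B n) <= r)%N -> mx_cv B A -> (\rank A <= r)%N.
Proof.
move=> rankB BA; rewrite leqNgt; apply/negP => rA.
pose f := maxrankfun A.
have full : row_full (rowsub f A)^T by rewrite /row_full mxrank_tr; exact: maxrowsub_free.
pose g := fullrankfun full.
pose minor (X : 'M[R]_(L, K)) : 'M[R]_(\rank A) := rowsub g (rowsub f X)^T.
have detA : \det (minor A) != 0 by rewrite -unitfE -unitmxE; exact: fullrowsub_unit.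
have detB n : \det (minor (B n)) = 0.
  apply/eqP; apply: contraTT rA => /negPf detBn; rewrite -leqNgt.
  have unitB : minor (B n) \in unitmx by rewrite unitmxE unitfE detBn.
  rewrite -(mxrank_unit unitB); apply: leq_trans (rankB n).
  apply: leq_trans (mxrankS (rowsub_sub g _)) _.
  by rewrite mxrank_tr; exact: mxrankS (rowsub_sub f _).
have minor_cv : Un_cv (fun n => \det (minor (B n))) (\det (minor A)).
  by apply: Un_cv_det => i j; rewrite !mxE; apply: (Un_cv_ext _ _ _ _ (BA _ _)) => n; rewrite !mxE.
have := UL_sequence _ _ _ minor_cv (Un_cv_ext _ _ (fun n => esym (detB n)) _ (Un_cv_const 0)).
by move/eqP; rewrite (negPf detA).
Qed.

Lemma mx_bolzano_weierstrass L K (u : nat -> 'M[R]_(L, K)) (C : 'I_L -> 'I_K -> R) :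
  (forall n i j, Rle (Rabs (u n i j)) (C i j)) ->
  exists (phi : nat -> nat) (A : 'M[R]_(L, K)),
    (forall n, (phi n < phi n.+1)%N) /\ mx_cv (fun n => u (phi n)) A.
Proof.
move=> uC.
have [phi phiS cv_phi] := bolzano_weierstrass_fin
  (u := fun n (p : 'I_L * 'I_K) => u n p.1 p.2) (fun n p => uC n p.1 p.2) (enum [set: 'I_L * 'I_K]).
have lim i j : exists a, Un_cv (fun n => u (phi n) i j) a.
  by apply: (cv_phi (i, j)); rewrite mem_enum in_setT.
exists phi, (\matrix_(i, j) proj1_sig (constructive_indefinite_description _ (lim i j))).
by split=> // i j; rewrite mxE; case: constructive_indefinite_description.
Qed.

End MatrixLimits.

Section Cadzow.
Local Open Scope ring_scope.
Variables (L K r : nat) (M : 'M[R]_(L, K)).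
Hypothesis M_gt0 : forall (l : 'I_L) (k : 'I_K), Rlt 0 (M l k).
Variables (PH PM : 'M[R]_(L, K) -> 'M[R]_(L, K)).
Hypothesis PH_orth : is_orth_proj_hankel M PH.
Hypothesis PM_nearest : is_nearest_low_rank r M PM.
Local Notation ip := (inprodM M).
Local Notation sqnorm Z := (inprodM M Z Z).
Implicit Types Z W : 'M[R]_(L, K).

Lemma hankelB Z W : hankel Z -> hankel W -> hankel (Z - W).
Proof. by move=> hZ hW i i' j j' e; rewrite !mxE (hZ _ _ _ _ e) (hW _ _ _ _ e). Qed.

Lemma inprodM_pythagoras Z W : ip Z W = 0 -> sqnorm (Z + W) = Rplus (sqnorm Z) (sqnorm W).
Proof. by move=> ZW; rewrite inprodM_sqrD ZW; Rops; ring. Qed.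

Lemma nearest_low_rank_sqnorm Z W :
  (\rank W <= r)%N -> Rle (sqnorm (Z - PM Z)) (sqnorm (Z - W)).
Proof.
move=> rW; have := (PM_nearest Z).2 W rW; rewrite /normM.
by apply: sqrt_le_0; apply: inprodM_ge0.
Qed.

(* Pi_M Z is also nearest to Z among the multiples (1 - t) Pi_M Z, which have
   rank at most r, so the derivative in t vanishes at t = 0. *)
Lemma low_rank_residual_orth Z : ip (Z - PM Z) (PM Z) = 0.
Proof.
suff : Rle (pow (ip (Z - PM Z) (PM Z)) 2) (Rmult 0 (sqnorm (PM Z))) by Rops; nra.
apply: quadratic_nonneg_discriminant (inprodM_ge0 M_gt0 _) _ => t.
have rank_scaled : (\rank ((1 - t) *: PM Z) <= r)%N.
  by apply: leq_trans (PM_nearest Z).1; apply/mxrankS/scalemx_sub.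
have := nearest_low_rank_sqnorm Z rank_scaled.
have -> : Z - (1 - t) *: PM Z = (Z - PM Z) + t *: PM Z.
  by apply/matrixP => i j; rewrite !mxE; Rops; ring.
by rewrite (inprodM_sqrD M (Z - PM Z)) !inprodMZr !inprodMZl; Rops; nra.
Qed.

Lemma sqnorm_low_rank_split Z : sqnorm Z = Rplus (sqnorm (PM Z)) (sqnorm (Z - PM Z)).
Proof.
have -> : sqnorm Z = sqnorm ((Z - PM Z) + PM Z) by rewrite subrK.
by rewrite Rplus_comm inprodM_pythagoras // low_rank_residual_orth.
Qed.

Lemma sqnorm_hankel_split Z : sqnorm Z = Rplus (sqnorm (PH Z)) (sqnorm (Z - PH Z)).
Proof.
have -> : sqnorm Z = sqnorm ((Z - PH Z) + PH Z) by rewrite subrK.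
by rewrite Rplus_comm inprodM_pythagoras //; apply: (PH_orth Z).2 (PH_orth Z).1.
Qed.

Variable X : 'M[R]_(L, K).

Definition cadzow n := iter n (fun Z => PH (PM Z)) X.

Local Notation Y := cadzow.
Local Notation gapM n := (sqnorm (Y n - PM (Y n))).
Local Notation gapH n := (sqnorm (PM (Y n) - Y n.+1)).
Local Notation step n := (sqnorm (Y n.+1 - Y n)).

Lemma cadzowS n : Y n.+1 = PH (PM (Y n)).
Proof. by []. Qed.

Lemma cadzow_hankel n : (0 < n)%N -> hankel (Y n).
Proof. by case: n => // n _; exact: (PH_orth _).1. Qed.

Lemma cadzow_sqnorm_le n : Rle (sqnorm (Y n)) (sqnorm X).
Proof.
elim: n => [|n IH]; first exact: Rle_refl.
apply: Rle_trans IH; rewrite cadzowS.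
have := sqnorm_hankel_split (PM (Y n)); have := sqnorm_low_rank_split (Y n).
have := inprodM_ge0 M_gt0 (PM (Y n) - PH (PM (Y n))).
have := inprodM_ge0 M_gt0 (Y n - PM (Y n)).
lra.
Qed.

Lemma cadzow_entry_bound n i j : Rle (Rabs (Y n i j)) (Rplus 1 (Rdiv (sqnorm X) (M i j))).
Proof. exact/entry_bound_inprodM/cadzow_sqnorm_le. Qed.

Lemma hankel_residual_orth n Z : hankel Z -> ip (PM (Y n) - Y n.+1) Z = 0.
Proof. exact: (PH_orth _).2. Qed.

Lemma gapM_split n : (0 < n)%N -> gapM n = Rplus (gapH n) (step n).
Proof.
move=> n_gt0.
have -> : Y n - PM (Y n) = - ((PM (Y n) - Y n.+1) + (Y n.+1 - Y n)).
  by apply/matrixP => i j; rewrite !mxE; Rops; ring.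
rewrite inprodM_sqrN inprodM_pythagoras // hankel_residual_orth //.
by apply: hankelB; apply: cadzow_hankel.
Qed.

Lemma gapM_succ_le n : Rle (gapM n.+1) (gapH n).
Proof.
apply: Rle_trans (nearest_low_rank_sqnorm _ (PM_nearest (Y n)).1) _.
by rewrite -inprodM_sqrN opprB; exact: Rle_refl.
Qed.

Lemma gapM_inprod n : (0 < n)%N -> gapM n = ip (Y n - Y n.+1) (Y n).
Proof.
move=> n_gt0.
have -> : Y n - Y n.+1 = (Y n - PM (Y n)) + (PM (Y n) - Y n.+1).
  by apply/matrixP => i j; rewrite !mxE; Rops; ring.
rewrite (inprodMDl M (Y n - PM (Y n))) hankel_residual_orth; last exact: cadzow_hankel.
rewrite -[X in _ = ip _ X + _](subrK (PM (Y n))).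
by rewrite (inprodMDr M (Y n - PM (Y n))) low_rank_residual_orth; Rops; ring.
Qed.

Lemma gapM_sqr_le n : (0 < n)%N -> Rle (gapM n * gapM n) (step n * sqnorm X).
Proof.
move=> n_gt0; rewrite (gapM_inprod n_gt0).
apply: Rle_trans (inprodM_cauchy_schwarz M_gt0 _ _) _.
rewrite -inprodM_sqrN opprB.
by apply: Rmult_le_compat_l; [exact: inprodM_ge0 | exact: cadzow_sqnorm_le].
Qed.

Lemma step_cv0 : Un_cv (fun n => step n.+1) 0.
Proof.
pose u k := gapM k.+1.
have u_ge0 k : Rle 0 (u k) by apply: inprodM_ge0.
have step_le k : Rle (step k.+1) (u k - u k.+1).
  by have := gapM_succ_le k.+1; rewrite /u (gapM_split (ltn0Sn k)); lra.
have u_decr : Un_decreasing u.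
  by move=> k; have := step_le k; have := inprodM_ge0 M_gt0 (Y k.+2 - Y k.+1); lra.
have u_lb : has_lb u.
  by exists 0 => x [k ->]; rewrite /opp_seq; have := u_ge0 k; Rops; lra.
have [l ul] := decreasing_cv u u_decr u_lb.
apply: (Un_cv_squeeze0 (v := fun k => u k - u k.+1)).
  by move=> k; split; [exact: inprodM_ge0 | exact: step_le].
by rewrite -(Rminus_diag l); apply: CV_minus ul ((Un_cv_succE _ _).2 ul).
Qed.

Lemma gapM_cv0 : Un_cv (fun n => gapM n) 0.
Proof.
apply/Un_cv_succE/(Un_cv_squeeze0 (v := fun k => sqrt (step k.+1 * sqnorm X))).
  move=> k; split; first exact: inprodM_ge0.
  rewrite -(sqrt_square (gapM k.+1)); last exact: inprodM_ge0.
  exact/sqrt_le_1_alt/gapM_sqr_le.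
apply: Un_cv_sqrt0; rewrite -(Rmult_0_l (sqnorm X)).
exact: CV_mult step_cv0 (Un_cv_const _).
Qed.

Lemma gapH_cv0 : Un_cv (fun n => gapH n) 0.
Proof.
apply/Un_cv_succE/(Un_cv_squeeze0 (v := fun k => gapM k.+1)).
  move=> k; split; first exact: inprodM_ge0.
  by rewrite (gapM_split (ltn0Sn k)); have := inprodM_ge0 M_gt0 (Y k.+2 - Y k.+1); lra.
exact: (Un_cv_succE (fun n => gapM n) 0).2 gapM_cv0.
Qed.

Lemma cadzow_subseq_hankel (phi : nat -> nat) A :
  (forall n, (phi n < phi n.+1)%N) -> mx_cv (fun n => Y (phi n)) A -> hankel A.
Proof.
move=> phiS YA i i' j j' e.
have phiS_gt0 n : (0 < phi n.+1)%N := leq_ltn_trans (leq0n _) (phiS n).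
apply: (UL_sequence _ _ _ ((Un_cv_succE _ _).2 (YA i j))).
apply: (Un_cv_ext _ _ _ _ ((Un_cv_succE _ _).2 (YA i' j'))) => n.
by rewrite (cadzow_hankel (phiS_gt0 n) e).
Qed.

Lemma cadzow_subseq_low_rank (phi : nat -> nat) A :
  (forall n, (phi n < phi n.+1)%N) -> mx_cv (fun n => Y (phi n)) A -> (\rank A <= r)%N.
Proof.
move=> phiS YA; apply: (mxrank_le_limit (B := fun n => PM (Y (phi n)))) => [n | i j].
  exact: (PM_nearest _).1.
have gap_cv := Un_cv_entry_inprodM0 M_gt0 i j
  (Un_cv_subseq (u := fun n => gapM n) phiS gapM_cv0).
have := CV_minus _ _ _ _ (YA i j) gap_cv; rewrite Rminus_0_r.
by apply: Un_cv_ext => n; rewrite !mxE; Rops; ring.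
Qed.

End Cadzow.

Theorem mainTheorem3 (L K r : nat) (hL : (0 < L)%N) (hK : (0 < K)%N)
  (M : 'M[R]_(L, K)) (hM : forall (l : 'I_L) (k : 'I_K), Rlt 0 (M l k))
  (PH PM : 'M[R]_(L, K) -> 'M[R]_(L, K))
  (hPH : is_orth_proj_hankel M PH)
  (hPM : is_nearest_low_rank r M PM)
  (X : 'M[R]_(L, K)) :
  let Y := fun n : nat => iter n (fun Z => PH (PM Z)) X in
  Un_cv (fun n => normM M (Y n - PM (Y n))%R) 0 /\
  Un_cv (fun n => normM M (PM (Y n) - Y n.+1)%R) 0 /\
  exists (phi : nat -> nat) (A : 'M[R]_(L, K)),
    (forall n, (phi n < phi n.+1)%N) /\
    mx_cv (fun n => Y (phi n)) A /\
    hankel A /\ (\rank A <= r)%N.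
Proof.
move=> Y; split; first exact: Un_cv_sqrt0 (gapM_cv0 hM hPH hPM X).
split; first exact: Un_cv_sqrt0 (gapH_cv0 hM hPH hPM X).
have [phi [A [phiS YA]]] := mx_bolzano_weierstrass (cadzow_entry_bound hM hPH hPM X).
exists phi, A; do 2!split => //.
split; first exact: (cadzow_subseq_hankel hPH phiS YA).
exact: (cadzow_subseq_low_rank hM hPH hPM phiS YA).
Qed.
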